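(* Let $A=(a_{ij}) \in \mathbb{R}^{m \times r}$ and $B=(b_{ji}) \in \mathbb{R}^{r \times n}$ with $B$ of full rank $n$. The following are equivalent: (i) for all $\kappa \in \mathbb{R}^r_+$ and $y \in \mathbb{R}^m$, the system $\sum_{j=1}^r a_{ij}\, \kappa_j\, x_1^{b_{j1}} \cdots x_n^{b_{jn}} = y_i$, $i = 1, \dots, m$, has at most one solution $x \in \mathbb{R}^n_+$; (ii) $\sigma(\ker(A)) \cap \sigma(\mathrm{im}(B)) = \{0\}$.
   Context: $\mathbb{R}_+$ denotes the strictly positive reals; exponents are arbitrary reals. $\sigma$ is the componentwise sign vector in $\{-,0,+\}^r$, $\sigma(T)=\{\sigma(x)\mid x\in T\}$, and $0$ denotes the zero sign vector. *)

From Stdlib Require Import Reals List.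
Import ListNotations.
Open Scope R_scope.

(* Vectors in R^d are functions nat -> R, only indices < d matter.
   Matrices are functions nat -> nat -> R. *)

Definition sumR (d : nat) (f : nat -> R) : R :=
  fold_right Rplus 0 (map f (seq 0 d)).
Definition prodR (d : nat) (f : nat -> R) : R :=
  fold_right Rmult 1 (map f (seq 0 d)).

Inductive sign := Neg | Zero | Pos.

Definition sgn (x : R) : sign :=
  match Rlt_dec x 0 with
  | left _ => Neg
  | right _ => if Req_dec_T x 0 then Zero else Pos
  end.

Definition sigma (d : nat) (x : nat -> R) : list sign :=
  map (fun j => sgn (x j)) (seq 0 d).

Definition zero_sign (d : nat) : list sign := repeat Zero d.

Definition in_ker (m r : nat) (A : nat -> nat -> R) (u : nat -> R) : Prop :=
  forall i, (i < m)%nat -> sumR r (fun j => A i j * u j) = 0.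

Definition in_im (r n : nat) (B : nat -> nat -> R) (w : nat -> R) : Prop :=
  exists v : nat -> R, forall j, (j < r)%nat -> w j = sumR n (fun k => B j k * v k).

Definition full_col_rank (r n : nat) (B : nat -> nat -> R) : Prop :=
  forall v : nat -> R,
    (forall j, (j < r)%nat -> sumR n (fun k => B j k * v k) = 0) ->
    forall k, (k < n)%nat -> v k = 0.

Definition gmap (r n : nat) (A B : nat -> nat -> R) (kappa x : nat -> R) (i : nat) : R :=
  sumR r (fun j => A i j * kappa j * prodR n (fun k => Rpower (x k) (B j k))).

Definition positive_vec (d : nat) (x : nat -> R) : Prop :=
  forall k, (k < d)%nat -> 0 < x k.

Definition at_most_one_pos_solution (m r n : nat) (A B : nat -> nat -> R) : Prop :=
  forall kappa : nat -> R, positive_vec r kappa ->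
  forall y : nat -> R,
  forall x1 x2 : nat -> R,
    positive_vec n x1 -> positive_vec n x2 ->
    (forall i, (i < m)%nat -> gmap r n A B kappa x1 i = y i) ->
    (forall i, (i < m)%nat -> gmap r n A B kappa x2 i = y i) ->
    forall k, (k < n)%nat -> x1 k = x2 k.

Definition sign_condition (m r n : nat) (A B : nat -> nat -> R) : Prop :=
  forall s : list sign,
    ((exists u, in_ker m r A u /\ sigma r u = s) /\
     (exists w, in_im r n B w /\ sigma r w = s))
    <-> s = zero_sign r.

From Stdlib Require Import Reals List Lra Lia.
Open Scope R_scope.

(* Writing a positive vector as x = exp(xi), the monomial
   kappa_j x^{b_j} becomes kappa_j exp(b_j . xi).  For two positive vectors
   x1 = exp(xi1), x2 = exp(xi2) put w = B (xi1 - xi2) and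
   u_j = kappa_j (exp(b_j . xi1) - exp(b_j . xi2)).  Since exp is increasing
   and kappa > 0, u and w have the same sign vector, and A u is the
   difference of the two left-hand sides of the system.
   - (ii) -> (i): two solutions give u in ker A and w in im B with equal sign
     vectors, hence w = 0; full column rank of B forces xi1 = xi2.
   - (i) -> (ii): conversely, from u in ker A and w = B v with equal sign
     vectors, the rates kappa_j = u_j / (exp w_j - 1) (or 1 where w_j = 0)
     are positive and make exp(v) and 1 two solutions for the same y; by (i)
     v = 0, hence w = 0.
   The file first develops finite sums, signs and sign vectors, then the
   logarithmic form of the monomials, then the two directions. *)

Lemma sumR_ext (d : nat) (f g : nat -> R) :
  (forall j, (j < d)%nat -> f j = g j) -> sumR d f = sumR d g.
Proof.
  intros Hfg. unfold sumR. f_equal. apply map_ext_in.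
  intros j Hj. apply in_seq in Hj. apply Hfg. lia.
Qed.

Lemma sumR_zero (d : nat) (f : nat -> R) :
  (forall j, (j < d)%nat -> f j = 0) -> sumR d f = 0.
Proof.
  intros Hf. rewrite (sumR_ext d f (fun _ => 0)) by exact Hf.
  unfold sumR. induction (seq 0 d) as [|a l IH]; simpl; lra.
Qed.

Lemma sumR_minus (d : nat) (f g : nat -> R) :
  sumR d f - sumR d g = sumR d (fun j => f j - g j).
Proof.
  unfold sumR. induction (seq 0 d) as [|a l IH]; simpl; lra.
Qed.

Lemma prodR_exp (d : nat) (f : nat -> R) :
  prodR d (fun k => exp (f k)) = exp (sumR d f).
Proof.
  unfold prodR, sumR. induction (seq 0 d) as [|a l IH]; simpl.
  - now rewrite exp_0.
  - now rewrite IH, exp_plus.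
Qed.

Lemma sgn_cases (x : R) :
  (x < 0 /\ sgn x = Neg) \/ (x = 0 /\ sgn x = Zero) \/ (0 < x /\ sgn x = Pos).
Proof.
  unfold sgn. destruct (Rlt_dec x 0); [left; auto|].
  destruct (Req_dec_T x 0); right; [left | right]; split; auto; lra.
Qed.

Lemma sgn_eq_iff (x y : R) :
  sgn x = sgn y <-> (x < 0 <-> y < 0) /\ (x = 0 <-> y = 0).
Proof.
  destruct (sgn_cases x) as [[Hx ->]|[[Hx ->]|[Hx ->]]];
  destruct (sgn_cases y) as [[Hy ->]|[[Hy ->]|[Hy ->]]];
  split; intros H; try discriminate; try (split; split; intros; lra);
  exfalso; destruct H as [[H1 H2] [H3 H4]];
  first [ specialize (H1 Hx) | specialize (H2 Hy)
        | specialize (H3 Hx) | specialize (H4 Hy) ]; lra.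
Qed.

Lemma sgn_mul_pos (c x : R) : 0 < c -> sgn (c * x) = sgn x.
Proof.
  intros Hc. apply sgn_eq_iff. split; split; intros H.
  - destruct (Rle_lt_dec 0 x); nra.
  - nra.
  - destruct (Rmult_integral _ _ H); lra.
  - subst; ring.
Qed.

Lemma sgn_exp_sub (a b : R) : sgn (exp a - exp b) = sgn (a - b).
Proof.
  apply sgn_eq_iff. split; split; intros H.
  - destruct (Rle_lt_dec b a) as [Hba|Hba]; [|lra].
    destruct (Rle_lt_or_eq_dec _ _ Hba) as [Hlt|<-].
    + pose proof (exp_increasing _ _ Hlt); lra.
    + lra.
  - pose proof (exp_increasing a b ltac:(lra)); lra.
  - assert (a = b) by (apply exp_inv; lra). lra.
  - replace a with b by lra. ring.
Qed.

Lemma div_pos_of_sgn (u d : R) : sgn u = sgn d -> d <> 0 -> 0 < u / d.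
Proof.
  intros Hs Hd.
  destruct (sgn_cases u) as [[Hu Eu]|[[Hu Eu]|[Hu Eu]]];
  destruct (sgn_cases d) as [[Hd' Ed]|[[Hd' Ed]|[Hd' Ed]]];
  rewrite Eu, Ed in Hs; try discriminate; try contradiction.
  - apply Rdiv_neg_neg; assumption.
  - apply Rdiv_lt_0_compat; assumption.
Qed.

(* A real u with the sign of w is a positive multiple of exp w - 1;
   [rate u w] is that multiple (chosen to be 1 when w = 0). *)
Definition rate (u w : R) : R :=
  if Req_dec_T w 0 then 1 else u / (exp w - 1).

Lemma rate_spec (u w : R) :
  sgn u = sgn w -> 0 < rate u w /\ rate u w * (exp w - 1) = u.
Proof.
  intros Hs.
  assert (Hsw : sgn (exp w - 1) = sgn w)
    by (rewrite <- exp_0, sgn_exp_sub, Rminus_0_r; reflexivity).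
  unfold rate. destruct (Req_dec_T w 0) as [Hw|Hw].
  - apply sgn_eq_iff in Hs as [_ Hzero].
    rewrite (proj2 Hzero Hw), Hw, exp_0. split; lra.
  - assert (Hd : exp w - 1 <> 0).
    { intros E. apply sgn_eq_iff in Hsw as [_ Hzero]. exact (Hw (proj1 Hzero E)). }
    split.
    + apply div_pos_of_sgn; [congruence | exact Hd].
    + field. exact Hd.
Qed.

Lemma sigma_nth (d : nat) (u : nat -> R) (j : nat) :
  (j < d)%nat -> nth j (sigma d u) Zero = sgn (u j).
Proof.
  intros Hj. unfold sigma.
  rewrite (nth_indep _ Zero (sgn (u 0%nat))) by (rewrite length_map, length_seq; lia).
  rewrite (map_nth (fun j => sgn (u j))), seq_nth by lia. reflexivity.
Qed.

Lemma sigma_eq_iff (d : nat) (u w : nat -> R) :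
  sigma d u = sigma d w <-> forall j, (j < d)%nat -> sgn (u j) = sgn (w j).
Proof.
  split.
  - intros H j Hj. rewrite <- !(sigma_nth d) by exact Hj. now rewrite H.
  - intros H. unfold sigma. apply map_ext_in.
    intros j Hj. apply in_seq in Hj. apply H. lia.
Qed.

Lemma sigma_zero_iff (d : nat) (u : nat -> R) :
  sigma d u = zero_sign d <-> forall j, (j < d)%nat -> u j = 0.
Proof.
  assert (Hz : zero_sign d = sigma d (fun _ => 0)).
  { unfold zero_sign, sigma. rewrite map_const, length_seq.
    destruct (sgn_cases 0) as [[? _]|[[_ ->]|[? _]]]; [lra | reflexivity | lra]. }
  rewrite Hz, sigma_eq_iff.
  split; intros H j Hj; specialize (H j Hj).
  - apply sgn_eq_iff in H. now apply H.
  - apply sgn_eq_iff. split; split; intros; lra.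
Qed.

Lemma sign_condition_iff (m r n : nat) (A B : nat -> nat -> R) :
  sign_condition m r n A B <->
  (forall u w, in_ker m r A u -> in_im r n B w -> sigma r u = sigma r w ->
   forall j, (j < r)%nat -> w j = 0).
Proof.
  split.
  - intros Hsc u w Hu Hw Hs. apply sigma_zero_iff, Hsc.
    split; [exists u | exists w]; auto.
  - intros H s. split.
    + intros [[u [Hu <-]] [w [Hw Hws]]]. rewrite <- Hws.
      apply sigma_zero_iff, (H u w); auto.
    + intros ->. split; exists (fun _ => 0); split;
        try (apply sigma_zero_iff; reflexivity).
      * intros i _. apply sumR_zero. intros; ring.
      * exists (fun _ => 0). intros j _. symmetry. apply sumR_zero. intros; ring.
Qed.

Definition log_monomial (n : nat) (B : nat -> nat -> R) (x : nat -> R) (j : nat) : R :=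
  sumR n (fun k => B j k * ln (x k)).

Lemma monomial_exp (n : nat) (B : nat -> nat -> R) (x : nat -> R) (j : nat) :
  prodR n (fun k => Rpower (x k) (B j k)) = exp (log_monomial n B x j).
Proof. apply prodR_exp. Qed.

Lemma log_monomial_sub (n : nat) (B : nat -> nat -> R) (x1 x2 : nat -> R) (j : nat) :
  log_monomial n B x1 j - log_monomial n B x2 j =
  sumR n (fun k => B j k * (ln (x1 k) - ln (x2 k))).
Proof.
  unfold log_monomial. rewrite sumR_minus.
  apply sumR_ext. intros. ring.
Qed.

Lemma gmap_sub (r n : nat) (A B : nat -> nat -> R) (kappa x1 x2 : nat -> R) (i : nat) :
  gmap r n A B kappa x1 i - gmap r n A B kappa x2 i =
  sumR r (fun j => A i j *
    (kappa j * (exp (log_monomial n B x1 j) - exp (log_monomial n B x2 j)))).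
Proof.
  unfold gmap. rewrite sumR_minus. apply sumR_ext.
  intros j _. rewrite !monomial_exp. ring.
Qed.

Lemma uniqueness_of_sign_condition (m r n : nat) (A B : nat -> nat -> R) :
  full_col_rank r n B ->
  (forall u w, in_ker m r A u -> in_im r n B w -> sigma r u = sigma r w ->
   forall j, (j < r)%nat -> w j = 0) ->
  at_most_one_pos_solution m r n A B.
Proof.
  intros HB Hsign kappa Hk y x1 x2 Hx1 Hx2 E1 E2.
  set (v := fun k => ln (x1 k) - ln (x2 k)).
  set (w := fun j => sumR n (fun k => B j k * v k)).
  set (u := fun j => kappa j *
    (exp (log_monomial n B x1 j) - exp (log_monomial n B x2 j))).
  assert (Hker : in_ker m r A u).
  { intros i Hi. pose proof (gmap_sub r n A B kappa x1 x2 i) as D.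
    rewrite E1, E2 in D by exact Hi. unfold u. lra. }
  assert (Hsig : sigma r u = sigma r w).
  { apply sigma_eq_iff. intros j Hj. unfold u.
    rewrite sgn_mul_pos, sgn_exp_sub, log_monomial_sub by (apply Hk; exact Hj).
    reflexivity. }
  assert (Hv0 : forall k, (k < n)%nat -> v k = 0)
    by (apply HB, (Hsign u w Hker); [exists v; reflexivity | exact Hsig]).
  intros k Hkn. specialize (Hv0 k Hkn). unfold v in Hv0.
  apply ln_inv; [exact (Hx1 k Hkn) | exact (Hx2 k Hkn) | lra].
Qed.

Lemma sign_condition_of_uniqueness (m r n : nat) (A B : nat -> nat -> R) :
  at_most_one_pos_solution m r n A B ->
  forall u w, in_ker m r A u -> in_im r n B w -> sigma r u = sigma r w ->
  forall j, (j < r)%nat -> w j = 0.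
Proof.
  intros Huniq u w Hu [v Hv] Hs.
  set (kappa := fun j => rate (u j) (w j)).
  assert (Hrate : forall j, (j < r)%nat ->
            0 < kappa j /\ kappa j * (exp (w j) - 1) = u j)
    by (intros j Hj; apply rate_spec; exact (proj1 (sigma_eq_iff r u w) Hs j Hj)).
  assert (Hlog_v : forall j, (j < r)%nat -> log_monomial n B (fun k => exp (v k)) j = w j).
  { intros j Hj. rewrite Hv by exact Hj. unfold log_monomial.
    apply sumR_ext. intros. now rewrite ln_exp. }
  assert (Hlog_1 : forall j, log_monomial n B (fun _ => 1) j = 0).
  { intros j. unfold log_monomial. apply sumR_zero. intros. rewrite ln_1. ring. }
  assert (Hv0 : forall k, (k < n)%nat -> exp (v k) = 1).
  { apply (Huniq kappa (fun j Hj => proj1 (Hrate j Hj))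
             (gmap r n A B kappa (fun _ => 1))); auto.
    - intros k _. apply exp_pos.
    - intros k _. lra.
    - intros i Hi. apply Rminus_diag_uniq. rewrite gmap_sub, <- (Hu i Hi).
      apply sumR_ext. intros j Hj.
      rewrite Hlog_v, Hlog_1, exp_0, (proj2 (Hrate j Hj)) by exact Hj. reflexivity. }
  intros j Hj. rewrite Hv by exact Hj. apply sumR_zero. intros k Hk.
  rewrite <- (ln_exp (v k)), Hv0, ln_1 by exact Hk. ring.
Qed.

Theorem mainTheorem19 (m r n : nat) (A B : nat -> nat -> R)
  (HB : full_col_rank r n B) :
  at_most_one_pos_solution m r n A B <-> sign_condition m r n A B.
Proof.
  rewrite sign_condition_iff. split.
  - apply sign_condition_of_uniqueness.
  - apply uniqueness_of_sign_condition, HB.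
Qed.
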